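(* Let $Q$ be an automorphic loop and for $x\in Q$ define $P_x=R_x^{-1}L_{x^{-1}}$ (equivalently $P_x=R_x^{-1}R_x^J$, where $R_x^J=J^{-1}R_xJ$ and $J$ is inversion). Then for all $a,b\in Q$ we have $P_aP_bP_a=P_c$ where $c=b\,L_{a^{-1}}^{-1}R_a$. Moreover, $P_a^n=P_{a^n}$ for all $a\in Q$ and all integers $n$.
   Context: A loop is a set with a binary operation in which left and right division are uniquely solvable and which has a neutral element $1$. $R_a:x\mapsto xa$, $L_a:x\mapsto ax$; $\mathrm{Mlt}(Q)=\langle R_x,L_x\mid x\in Q\rangle$; $\mathrm{Inn}(Q)$ is the stabilizer of $1$ in $\mathrm{Mlt}(Q)$. $Q$ is automorphic if $\mathrm{Inn}(Q)\le\mathrm{Aut}(Q)$. Automorphic loops are power-associative (each element generates a cyclic group), so $x^{-1}$ and $a^n$ are well defined; $J:x\mapsto x^{-1}$. Maps act on the right and are composed left to right: $x(fg)=(xf)g$, and $xf$ denotes the image of $x$ under $f$. *)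

(* Loops given equationally: mul, left division ldiv (a \ b),
   right division rdiv (b / a), identity one. *)
From Stdlib Require Import ZArith.

Record loop := Loop {
  carrier :> Type;
  mul : carrier -> carrier -> carrier;
  ldiv : carrier -> carrier -> carrier;
  rdiv : carrier -> carrier -> carrier;
  one : carrier;
  ldiv_mul : forall a b, ldiv a (mul a b) = b;
  mul_ldiv : forall a b, mul a (ldiv a b) = b;
  rdiv_mul : forall a b, rdiv (mul b a) a = b;
  mul_rdiv : forall a b, mul (rdiv b a) a = b;
  mul1x : forall x, mul one x = x;
  mulx1 : forall x, mul x one = x
}.

Arguments mul {l}.
Arguments ldiv {l}.
Arguments rdiv {l}.
Arguments one {l}.

Section LoopDefs.
Variable Q : loop.

(* Maps act on the right; we represent x f as (f x), so "f then g" is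
   fun x => g (f x). *)
Definition Rm (a : Q) : Q -> Q := fun x => mul x a.
Definition Lm (a : Q) : Q -> Q := fun x => mul a x.
Definition Rinv (a : Q) : Q -> Q := fun x => rdiv x a.
Definition Linv (a : Q) : Q -> Q := fun x => ldiv a x.

(* Mlt(Q): the group generated by all R_x, L_x, i.e. all finite composites
   of the generators and their inverses. *)
Inductive mlt : (Q -> Q) -> Prop :=
  | mlt_id : mlt (fun x => x)
  | mlt_R f a : mlt f -> mlt (fun x => Rm a (f x))
  | mlt_Ri f a : mlt f -> mlt (fun x => Rinv a (f x))
  | mlt_L f a : mlt f -> mlt (fun x => Lm a (f x))
  | mlt_Li f a : mlt f -> mlt (fun x => Linv a (f x)).

Definition inn (f : Q -> Q) : Prop := mlt f /\ f one = one.

Definition is_automorphism (f : Q -> Q) : Prop :=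
  (exists g : Q -> Q, (forall x, g (f x) = x) /\ (forall x, f (g x) = x)) /\
  (forall x y, f (mul x y) = mul (f x) (f y)).

Definition automorphic : Prop := forall f, inn f -> is_automorphism f.

(* inverse x^{-1}: the solution of x * y = 1 (two-sided in automorphic loops) *)
Definition linv (x : Q) : Q := ldiv x one.

Fixpoint npow (a : Q) (n : nat) : Q :=
  match n with O => one | S m => mul (npow a m) a end.

Definition zpow (a : Q) (n : Z) : Q :=
  match n with
  | Z0 => one
  | Zpos p => npow a (Pos.to_nat p)
  | Zneg p => linv (npow a (Pos.to_nat p))
  end.

Definition Pm (x : Q) : Q -> Q := fun y => Lm (linv x) (Rinv x y).
Definition Pinv (x : Q) : Q -> Q := fun y => Rm x (Linv (linv x) y).

Definition Ppow (a : Q) (n : Z) : Q -> Q :=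
  match n with
  | Z0 => fun y => y
  | Zpos p => Nat.iter (Pos.to_nat p) (Pm a)
  | Zneg p => Nat.iter (Pos.to_nat p) (Pinv a)
  end.

End LoopDefs.

Arguments mlt {Q}.
Arguments inn {Q}.
Arguments automorphic Q : clear implicits.
Arguments linv {Q}.
Arguments zpow {Q}.
Arguments Pm {Q}.
Arguments Pinv {Q}.
Arguments Ppow {Q}.
Arguments Rm {Q}.
Arguments Lm {Q}.
Arguments Rinv {Q}.
Arguments Linv {Q}.

(* Every inner mapping is an automorphism, so it commutes with inversion.  This
   first gives the two-sided inverse and the antiautomorphic inverse property
   (xy)^-1 = y^-1 x^-1.  For P_a P_b P_a = P_c one applies the inner mapping
   phi = R_b L_{a^-1}^-1 R_a R_c^-1 to z^-1, where z = (y P_a) / b: phi sends z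
   to y / c, and the inverse property turns phi (z^-1) back into y P_c.  Taking
   b = a^k gives P_a P_{a^k} P_a = P_{a^(k+2)}, whence P_a^k = P_{a^k} by a
   two-step induction; taking b = a^-1 gives P_{a^-1} = P_a^-1. *)
From Stdlib Require Import ZArith.

Section Loops.

Variable Q : loop.

Lemma mul_cancel_l (x y z : Q) : mul x y = mul x z -> y = z.
Proof. intro E. rewrite <- (ldiv_mul Q x y), <- (ldiv_mul Q x z), E. reflexivity. Qed.

Lemma mul_cancel_r (x y z : Q) : mul y x = mul z x -> y = z.
Proof. intro E. rewrite <- (rdiv_mul Q x y), <- (rdiv_mul Q x z), E. reflexivity. Qed.

Lemma ldiv_diag (x : Q) : ldiv x x = one.
Proof. apply (mul_cancel_l x). rewrite mul_ldiv, mulx1. reflexivity. Qed.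

Lemma rdiv_diag (x : Q) : rdiv x x = one.
Proof. apply (mul_cancel_r x). rewrite mul_rdiv, mul1x. reflexivity. Qed.

Lemma mul_linv (x : Q) : mul x (linv x) = one.
Proof. apply mul_ldiv. Qed.

Lemma Pm_one (y : Q) : Pm one y = y.
Proof.
  unfold Pm, Lm, Rinv, linv. rewrite ldiv_diag, mul1x.
  rewrite <- (mulx1 Q y) at 1. apply rdiv_mul.
Qed.

Lemma PinvK (x y : Q) : Pinv x (Pm x y) = y.
Proof. unfold Pinv, Pm, Rm, Linv, Lm, Rinv. rewrite ldiv_mul. apply mul_rdiv. Qed.

Lemma PmK (x y : Q) : Pm x (Pinv x y) = y.
Proof. unfold Pinv, Pm, Rm, Linv, Lm, Rinv. rewrite rdiv_mul. apply mul_ldiv. Qed.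

Lemma iter_PmK (a : Q) (k : nat) (y : Q) :
  Nat.iter k (Pm a) (Nat.iter k (Pinv a) y) = y.
Proof.
  induction k as [|k IH]; [reflexivity|].
  rewrite Nat.iter_succ_r. simpl. rewrite PmK. exact IH.
Qed.

End Loops.

(* Unification unfolds Rm, Rinv, Lm, Linv, so each constructor strips the
   outermost translation or division from a map written with mul, rdiv, ldiv. *)
Ltac solve_mlt := repeat constructor.

Section AutomorphicLoops.

Variable Q : loop.
Hypothesis HA : automorphic Q.

Lemma inn_morph_mul (f : Q -> Q) :
  mlt f -> f one = one -> forall x y : Q, f (mul x y) = mul (f x) (f y).
Proof. intros Hm H1. exact (proj2 (HA f (conj Hm H1))). Qed.

Lemma linv_mul_l (x : Q) : mul (linv x) x = one.
Proof.
  set (T := fun z : Q => ldiv x (mul z x)).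
  assert (T_one : T one = one) by (unfold T; rewrite mul1x; apply ldiv_diag).
  pose proof (inn_morph_mul T ltac:(unfold T; solve_mlt) T_one (rdiv one x) x) as E.
  unfold T in E. rewrite mul_rdiv, mul1x, ldiv_diag, ldiv_mul in E.
  symmetry. exact E.
Qed.

Lemma linvK (x : Q) : linv (linv x) = x.
Proof. unfold linv at 1. rewrite <- (linv_mul_l x). apply ldiv_mul. Qed.

Lemma inn_morph_linv (f : Q -> Q) :
  mlt f -> f one = one -> forall x : Q, f (linv x) = linv (f x).
Proof.
  intros Hm H1 x. apply (mul_cancel_l Q (f x)).
  rewrite <- (inn_morph_mul f Hm H1), !mul_linv. exact H1.
Qed.

Lemma inn_fix_linv (f : Q -> Q) (x : Q) :
  mlt f -> f one = one -> f (linv x) = linv x -> f x = x.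
Proof.
  intros Hm H1 Hx. rewrite <- (linvK x) at 1. rewrite (inn_morph_linv f Hm H1), Hx. apply linvK.
Qed.

Lemma Rm_linv_comm (u x : Q) : mul (mul u (linv x)) x = mul (mul u x) (linv x).
Proof.
  set (B := fun z : Q => mul (mul z x) (linv x)).
  assert (B_one : B one = one) by (unfold B; rewrite mul1x; apply mul_linv).
  assert (Hm : mlt B) by (unfold B; solve_mlt).
  assert (B_x : B x = x).
  { apply (inn_fix_linv B x Hm B_one). unfold B. rewrite linv_mul_l. apply mul1x. }
  pose proof (inn_morph_mul B Hm B_one (rdiv u x) x) as E.
  rewrite B_x in E. unfold B in E. rewrite mul_rdiv in E. symmetry. exact E.
Qed.

Lemma Lm_linv_Rm_comm (u w : Q) : mul (linv w) (mul u w) = mul (mul (linv w) u) w.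
Proof.
  set (D := fun z : Q => mul (linv w) (mul z w)).
  assert (D_one : D one = one) by (unfold D; rewrite mul1x; apply linv_mul_l).
  assert (Hm : mlt D) by (unfold D; solve_mlt).
  assert (D_w : D w = w).
  { apply (inn_fix_linv D w Hm D_one). unfold D. rewrite linv_mul_l. apply mulx1. }
  pose proof (inn_morph_mul D Hm D_one (rdiv u w) w) as E.
  rewrite D_w in E. unfold D in E. rewrite mul_rdiv in E. exact E.
Qed.

Lemma rdiv_mul_linv (w y : Q) : mul (linv w) (rdiv y w) = rdiv (mul (linv w) y) w.
Proof.
  apply (mul_cancel_r Q w). rewrite mul_rdiv, <- Lm_linv_Rm_comm, mul_rdiv. reflexivity.
Qed.

(* Apply the inner mapping R_x R_y R_{xy}^-1 to (y^-1 / x) x^-1. *)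
Lemma linvM (x y : Q) : linv (mul x y) = mul (linv y) (linv x).
Proof.
  set (w := mul x y).
  set (T := fun z : Q => rdiv (mul (mul z x) y) w).
  assert (T_one : T one = one) by (unfold T; rewrite mul1x; apply rdiv_diag).
  pose proof (inn_morph_mul T ltac:(unfold T; solve_mlt) T_one (rdiv (linv y) x) (linv x))
    as E.
  assert (E1 : T (rdiv (linv y) x) = linv w).
  { unfold T. rewrite mul_rdiv, linv_mul_l, <- (linv_mul_l w). apply rdiv_mul. }
  assert (E2 : T (linv x) = rdiv y w) by (unfold T; rewrite linv_mul_l, mul1x; reflexivity).
  unfold T at 1 in E. rewrite Rm_linv_comm, mul_rdiv, E1, E2, rdiv_mul_linv in E.
  apply (mul_cancel_r Q y). symmetry.
  rewrite <- (mul_rdiv Q w (mul (mul (linv y) (linv x)) y)), E. apply mul_rdiv.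
Qed.

Lemma Pm_conj (a b y : Q) :
  Pm a (Pm b (Pm a y)) = Pm (Rm a (Linv (linv a) b)) y.
Proof.
  set (c := mul (ldiv (linv a) b) a).
  change (Rm a (Linv (linv a) b)) with c.
  set (phi := fun u : Q => rdiv (mul (ldiv (linv a) (mul u b)) a) c).
  assert (phi_one : phi one = one) by (unfold phi; rewrite mul1x; apply rdiv_diag).
  assert (Hm : mlt phi) by (unfold phi; solve_mlt).
  set (z := rdiv (Pm a y) b).
  assert (phi_z : phi z = rdiv y c).
  { unfold phi, z. unfold Pm, Lm, Rinv. rewrite mul_rdiv, ldiv_mul, mul_rdiv.
    reflexivity. }
  assert (Pc : linv (mul (phi (linv z)) c) = Pm c y).
  { rewrite linvM, (inn_morph_linv phi Hm phi_one), linvK, phi_z. reflexivity. }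
  set (p := ldiv (linv a) (mul (linv z) b)).
  assert (phi_zinv : mul (phi (linv z)) c = mul p a) by apply mul_rdiv.
  assert (p_inv : linv p = rdiv (mul (linv b) z) a).
  { apply (mul_cancel_r Q a). rewrite mul_rdiv.
    transitivity (linv (mul (linv a) p)).
    - rewrite linvM, linvK. reflexivity.
    - unfold p. rewrite mul_ldiv, linvM, linvK. reflexivity. }
  rewrite <- Pc, phi_zinv, linvM, p_inv. reflexivity.
Qed.

Lemma ldiv_linv_npow (a : Q) (k : nat) : ldiv (linv a) (npow Q a k) = npow Q a (S k).
Proof.
  assert (mul_linv_npowS : forall j, mul (linv a) (npow Q a (S j)) = npow Q a j).
  { induction j as [|j IH].
    - simpl. rewrite mul1x. apply linv_mul_l.
    - change (npow Q a (S (S j))) with (mul (npow Q a (S j)) a).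
      rewrite Lm_linv_Rm_comm, IH. reflexivity. }
  rewrite <- (mul_linv_npowS k). apply ldiv_mul.
Qed.

Lemma iter_Pm (a : Q) (k : nat) (y : Q) : Nat.iter k (Pm a) y = Pm (npow Q a k) y.
Proof.
  revert y.
  enough (both : forall j, (forall y, Nat.iter j (Pm a) y = Pm (npow Q a j) y) /\
                           (forall y, Nat.iter (S j) (Pm a) y = Pm (npow Q a (S j)) y))
    by apply both.
  induction j as [|j [IH IHS]].
  - split; intro y; simpl.
    + symmetry. apply Pm_one.
    + rewrite mul1x. reflexivity.
  - split; [exact IHS|]. intro y.
    rewrite Nat.iter_succ, Nat.iter_succ_r, IH, Pm_conj.
    unfold Rm, Linv. rewrite ldiv_linv_npow. reflexivity.
Qed.

Lemma Pm_linv (x y : Q) : Pm (linv x) y = Pinv x y.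
Proof.
  assert (PmK_linv : forall u, Pm (linv x) (Pm x u) = u).
  { intro u. pose proof (Pm_conj x (linv x) u) as E.
    unfold Rm, Linv in E. rewrite ldiv_diag, mul1x in E.
    rewrite <- (PinvK Q x (Pm (linv x) (Pm x u))), E. apply PinvK. }
  rewrite <- (PmK Q x y) at 1. apply PmK_linv.
Qed.

End AutomorphicLoops.

Theorem lemma2p3 (Q : loop) (HA : automorphic Q) :
  (forall a b : Q,
     forall y : Q,
       Pm a (Pm b (Pm a y)) = Pm (Rm a (Linv (linv a) b)) y) /\
  (forall (a : Q) (n : Z) (y : Q), Ppow a n y = Pm (zpow a n) y).
Proof.
  split.
  - exact (Pm_conj Q HA).
  - intros a [|p|p] y; simpl.
    + symmetry. apply Pm_one.
    + apply (iter_Pm Q HA).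
    + rewrite (Pm_linv Q HA).
      rewrite <- (iter_PmK Q a (Pos.to_nat p) y) at 2.
      rewrite (iter_Pm Q HA). symmetry. apply PinvK.
Qed.
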